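(* In the non-exceptional case, for every integer $s$ the tuples $u=(u_1,\dots,u_{2r})$ and $v=v(s)=(v_1,\dots,v_{2r})$ defined by $$u_{2\rho-1}:=\check\mu_{a_{j_\rho}},\quad u_{2\rho}:=\check\mu_{1+a_{j_\rho}},\quad v_{2\rho-1}:=\lambda_{1+j_{\rho-1}}-s,\quad v_{2\rho}:=\lambda_{j_\rho}-s\qquad(\rho=1,\dots,r)$$ belong to $X_0^+(2r)$, with $u_i+u_{2r+1-i}=-w$ and $v_i+v_{2r+1-i}=w'+n-m-1-2s$ for all $i$.
   Context: Let $n,m\ge1$, not both $1$, and not both odd (non-exceptional case). For $N\ge1$: $L_0^+(N):=\{(w,l)\in\mathbb Z\times\mathbb Z^N:\ l_1>\dots>l_N,\ l_i+l_{N+1-i}=0,\ w+l_i\equiv N+1 \bmod 2\}$; $X^+(N):=\{x\in\mathbb Z^N:x_1\ge\dots\ge x_N\}$; $X_0^+(N):=\{x\in X^+(N):x_i+x_{N+1-i}\text{ independent of } i\}$. Bijection $L_0^+(N)\to X_0^+(N)$: $(w,l)\mapsto\mu$, $\mu_i=\frac{w+l_i+2i-1-N}{2}$; inverse $w=\mu_1+\mu_N$, $l_i=2\mu_i+N+1-w-2i$. Let $\mu\in X_0^+(n)$, $\nu\in X_0^+(m)$ correspond to $(w,l)$, $(w',l')$; $\check\mu_i:=-\mu_{n+1-i}$. Standing assumptions: $l_1>l'_1$ and $l_i\neq l'_j$ for all $i,j$. Position tuple: $a_j\in\{1,\dots,n-1\}$ unique with $l_{a_j}>l'_j\ge l_{1+a_j}$.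 Jump indices: $j\in\{1,\dots,m-1\}$ with $a_j<a_{j+1}$, listed $j_1<\dots<j_k$; $j_0:=0$, $j_{k+1}:=m$, $r:=k+1$. $\lambda_j:=\nu_j+a_j-j$. *)

(* Tuples are 1-based functions nat -> int; only the entries
   with index in 1..N are meaningful. *)
From HB Require Import structures.
From mathcomp Require Import all_boot all_order all_algebra.
Set Implicit Arguments. Unset Strict Implicit. Unset Printing Implicit Defensive.
Import Order.TTheory GRing.Theory Num.Theory.
Local Open Scope ring_scope.

Definition Xplus (N : nat) (x : nat -> int) : Prop :=
  forall i : nat, (1 <= i)%N -> (i < N)%N -> x i.+1 <= x i.

Definition X0plus (N : nat) (x : nat -> int) : Prop :=
  Xplus N x /\ exists c : int, forall i : nat, (1 <= i <= N)%N -> x i + x (N.+1 - i)%N = c.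

(* the bijection X_0^+(N) -> L_0^+(N): w = mu_1 + mu_N, l_i = 2mu_i + N + 1 - w - 2i *)
Definition wt (N : nat) (mu : nat -> int) : int := mu 1%N + mu N.
Definition lseq (N : nat) (mu : nat -> int) (i : nat) : int :=
  2 * mu i + (N.+1)%:Z - wt N mu - 2 * (i%:Z).

Definition chk (N : nat) (mu : nat -> int) (i : nat) : int := - mu (N.+1 - i)%N.

Definition is_position (n m : nat) (l l' : nat -> int) (a : nat -> nat) : Prop :=
  forall j : nat, (1 <= j <= m)%N ->
    [/\ (1 <= a j <= n.-1)%N, l' j < l (a j) & l (a j).+1 <= l' j].

Definition jumps (m : nat) (a : nat -> nat) : seq nat :=
  [seq j <- iota 1 m.-1 | (a j < a j.+1)%N].

Definition jidx (m : nat) (a : nat -> nat) (rho : nat) : nat :=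
  if rho == 0%N then 0%N
  else if (rho <= size (jumps m a))%N then nth 0%N (jumps m a) rho.-1 else m.

Definition lam (nu : nat -> int) (a : nat -> nat) (j : nat) : int :=
  nu j + (a j)%:Z - j%:Z.

From HB Require Import structures.
From mathcomp Require Import all_boot all_order all_algebra zify.
Set Implicit Arguments.
Unset Strict Implicit.
Unset Printing Implicit Defensive.
Import Order.TTheory GRing.Theory Num.Theory.
Local Open Scope ring_scope.

(* Since l and l' are strictly decreasing and antisymmetric under i |-> N+1-i,
   the position tuple is nondecreasing and satisfies a_{m+1-j} = n - a_j (the
   interval of l containing l'_{m+1-j} is the reflection of the one containing
   l'_j).  Hence the jump indices are symmetric under j |-> m - j and a is
   constant on each block (j_{rho-1}, j_rho].  Then u lists the decreasing
   tuple mu-check at the positions a_{j_1} < 1 + a_{j_1} <= a_{j_2} < ...,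
   which are symmetric about (n+1)/2, and v lists the nonincreasing
   lambda (shifted by s) at the ends of the blocks, with
   lambda_j + lambda_{m+1-j} = w' + n - m - 1.  Both tuples are thus
   nonincreasing with constant symmetric sums. *)

Lemma homo_leq_interval (T : Type) (r : T -> T -> Prop) (f : nat -> T) lo hi :
  (forall x, r x x) -> (forall y x z, r x y -> r y z -> r x z) ->
  (forall i, (lo <= i < hi)%N -> r (f i) (f i.+1)) ->
  forall i j, (lo <= i)%N -> (i <= j)%N -> (j <= hi)%N -> r (f i) (f j).
Proof.
move=> r_refl r_trans f_step i j lo_i le_ij j_hi.
apply: (@homo_leq_in T [pred k | lo <= k <= hi]%N f r r_refl r_trans);
  rewrite ?inE ?le_ij ?lo_i ?j_hi ?andbT //=; try lia.
- by move=> ? ? /andP [? ?] /andP [? ?] ? /andP [? ?]; rewrite inE; lia.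
- by move=> k /andP [? ?] /andP [? ?]; apply: f_step; lia.
Qed.

Lemma nonincr_step (f : nat -> int) lo hi :
  (forall i, (lo <= i < hi)%N -> f i.+1 <= f i) ->
  forall i j, (lo <= i)%N -> (i <= j)%N -> (j <= hi)%N -> f j <= f i.
Proof.
move=> f_step i j; apply: (@homo_leq_interval _ (fun y z => z <= y)) => //.
by move=> y z t /= zy ty; apply: le_trans zy.
Qed.

Lemma Xplus_nonincr N (x : nat -> int) i j :
  Xplus N x -> (1 <= i)%N -> (i <= j)%N -> (j <= N)%N -> x j <= x i.
Proof. by move=> x_decr; apply: nonincr_step => k /andP []; apply: x_decr. Qed.

Lemma X0plus_sum N (x : nat -> int) i :
  X0plus N x -> (1 <= i <= N)%N -> x i + x (N.+1 - i)%N = wt N x.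
Proof.
move=> [_ [c xc]] iN; rewrite xc // /wt.
by have := xc 1%N ltac:(lia); rewrite subSS subn0.
Qed.

Lemma lseq_sub N (x : nat -> int) i j :
  Xplus N x -> (1 <= i)%N -> (i <= j)%N -> (j <= N)%N ->
  lseq N x j + 2 * (j - i)%N%:Z <= lseq N x i.
Proof.
move=> x_decr i1 ij jN.
suff : lseq N x j + 2 * j%:Z <= lseq N x i + 2 * i%:Z by lia.
apply: (@nonincr_step (fun k => lseq N x k + 2 * k%:Z) 1 N) i1 ij jN => k /andP [k1 kN].
by have := x_decr k k1 kN; rewrite /lseq; lia.
Qed.

Lemma lseq_nonincr N (x : nat -> int) i j :
  Xplus N x -> (1 <= i)%N -> (i <= j)%N -> (j <= N)%N -> lseq N x j <= lseq N x i.
Proof. by move=> x_decr i1 ij jN; have := lseq_sub x_decr i1 ij jN; lia. Qed.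

Lemma lseq_interval_uniq N (x : nat -> int) (y : int) i k :
  Xplus N x -> (0 < i < N)%N -> (0 < k < N)%N ->
  lseq N x i.+1 <= y < lseq N x i -> lseq N x k.+1 <= y < lseq N x k -> i = k.
Proof.
move=> x_decr /andP [i0 iN] /andP [k0 kN] /andP [yi1 yi] /andP [yk1 yk].
have [ik|ki|//] := ltngtP i k.
- by have := lseq_nonincr x_decr (ltn0Sn i) ik (ltnW kN); lia.
- by have := lseq_nonincr x_decr (ltn0Sn k) ki (ltnW iN); lia.
Qed.

Lemma lseq_sym N (x : nat -> int) i :
  X0plus N x -> (1 <= i <= N)%N -> lseq N x (N.+1 - i) = - lseq N x i.
Proof. by move=> x0 iN; have := X0plus_sum x0 iN; rewrite /lseq; lia. Qed.

Lemma chk_nonincr N (x : nat -> int) i j :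
  Xplus N x -> (1 <= i)%N -> (i <= j)%N -> (j <= N)%N -> chk N x j <= chk N x i.
Proof. by move=> x_decr *; rewrite /chk lerN2; apply: (Xplus_nonincr x_decr); lia. Qed.

Lemma chk_sum N (x : nat -> int) i :
  X0plus N x -> (1 <= i <= N)%N -> chk N x i + chk N x (N.+1 - i) = - wt N x.
Proof.
move=> x0 iN; rewrite /chk -(X0plus_sum x0 iN) (_ : (N.+1 - (N.+1 - i) = i)%N); lia.
Qed.

Section PaddedSeq.

Variables (m : nat) (s : seq nat).
Local Notation t := (0%N :: rcons s m).

Lemma size_padded : size t = (size s).+2.
Proof. by rewrite /= size_rcons. Qed.

Lemma padded_sym rho : map (subn m) (rev s) = s -> (rho <= (size s).+1)%N ->
  nth 0%N t ((size s).+1 - rho) = (m - nth 0%N t rho)%N.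
Proof.
move=> s_sym rho_size.
have t_sym : map (subn m) (rev t) = t.
  by rewrite rev_cons rev_rcons /= map_rcons subnn subn0 s_sym.
rewrite -{1}t_sym (nth_map 0%N) ?size_rev ?size_padded; last by lia.
by rewrite nth_rev size_padded; [congr (_ - nth _ _ _)%N; lia | lia].
Qed.

Hypotheses (m_gt0 : (0 < m)%N) (s_sorted : sorted ltn s).
Hypothesis s_range : all (fun x => 0 < x < m)%N s.

Lemma padded_sorted : sorted ltn t.
Proof.
rewrite /= rcons_path path_sortedE; last exact: ltn_trans.
rewrite s_sorted andbT; apply/andP; split.
  by apply/allP => x xs; have /andP [] := allP s_range x xs.
case: s s_range => [|y s'] // /allP y_range /=.
by have /andP [] := y_range (last y s') (mem_last y s').
Qed.

Lemma padded_nth_lt i j : (i < j <= (size s).+1)%N -> (nth 0%N t i < nth 0%N t j)%N.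
Proof.
move=> /andP [ij j_size].
by apply: (sorted_ltn_nth ltn_trans 0%N padded_sorted); rewrite // inE size_padded; lia.
Qed.

Lemma padded_gap i x : x \in s -> ~~ (nth 0%N t i < x < nth 0%N t i.+1)%N.
Proof.
move=> xs; have xt : x \in t by rewrite in_cons mem_rcons in_cons xs !orbT.
have [i_big|i_small] := leqP (size t) i.+1.
  by rewrite [nth _ _ i.+1]nth_default // andbF.
have t_leq : sorted leq t by apply: sub_sorted padded_sorted => ? ? /ltnW.
have t_mono := sorted_leq_nth leq_trans leqnn 0%N t_leq.
have kt : (index x t < size t)%N by rewrite index_mem.
have [ki|ik] := leqP (index x t) i.
  have := t_mono (index x t) i; rewrite !inE nth_index // => /(_ kt (ltnW i_small) ki).
  by move=> x_le; rewrite negb_and -leqNgt x_le.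
have := t_mono i.+1 (index x t); rewrite !inE nth_index // => /(_ i_small kt ik).
by move=> le_x; rewrite negb_and -!leqNgt le_x orbT.
Qed.

End PaddedSeq.

Section Jumps.

Variables (m : nat) (a : nat -> nat).

Local Notation K := (size (jumps m a)).

Lemma mem_jumps j : (j \in jumps m a) = [&& (0 < j)%N, (j < m)%N & (a j < a j.+1)%N].
Proof.
rewrite mem_filter mem_iota andbC; case: (a j < a j.+1)%N; rewrite ?andbF //.
by apply/idP/idP => /andP [? ?]; apply/andP; split; lia.
Qed.

Lemma jumps_sorted : sorted ltn (jumps m a).
Proof. exact/sorted_filter/iota_ltn_sorted/ltn_trans. Qed.

Lemma jumps_range : all (fun j => 0 < j < m)%N (jumps m a).
Proof. by apply/allP => j; rewrite mem_jumps => /and3P [-> ->]. Qed.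

Lemma jumps_sym :
  (forall j, (0 < j < m)%N -> (a (m - j) < a (m - j).+1)%N = (a j < a j.+1)%N) ->
  map (subn m) (rev (jumps m a)) = jumps m a.
Proof.
move=> a_sym; have mem_sym j : j \in jumps m a -> (m - j)%N \in jumps m a.
  by rewrite !mem_jumps => /and3P [j0 jm jump]; rewrite a_sym ?jump; lia.
apply: (irr_sorted_eq ltn_trans ltnn); last 1 first.
- move=> j; apply/mapP/idP => [[i] | ].
    by rewrite mem_rev => /mem_sym ? ->.
  move=> jJ; exists (m - j)%N; first by rewrite mem_rev mem_sym.
  by move: jJ; rewrite mem_jumps => /and3P [? ? _]; lia.
- rewrite sorted_map rev_sorted.
  apply: (@sub_in_sorted _ [pred j | 0 < j < m]%N ltn) jumps_range jumps_sorted.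
  by move=> i j /andP [? ?] /andP [? ?] /=; rewrite /relpre; lia.
- exact: jumps_sorted.
Qed.

Lemma jidxE rho : (rho <= K.+1)%N ->
  jidx m a rho = nth 0%N (0%N :: rcons (jumps m a) m) rho.
Proof.
rewrite /jidx; case: rho => [|rho] //= rhoK; rewrite nth_rcons.
by case: (ltngtP rho K) => // gtK; lia.
Qed.

Lemma jidx_last : jidx m a K.+1 = m.
Proof. by rewrite /jidx /= ltnn. Qed.

Lemma jidx_jump rho : (0 < rho <= K)%N -> jidx m a rho \in jumps m a.
Proof.
by rewrite /jidx => /andP [rho0 rhoK]; rewrite gtn_eqF // rhoK mem_nth // prednK.
Qed.

Lemma jidx_sym rho : map (subn m) (rev (jumps m a)) = jumps m a -> (rho <= K.+1)%N ->
  jidx m a (K.+1 - rho) = (m - jidx m a rho)%N.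
Proof. by move=> J_sym rhoK; rewrite !jidxE ?leq_subr // padded_sym. Qed.

Hypothesis m_gt0 : (0 < m)%N.

Lemma jidx_lt i j : (i < j <= K.+1)%N -> (jidx m a i < jidx m a j)%N.
Proof.
move=> ijK; rewrite !jidxE; try lia.
exact: padded_nth_lt m_gt0 jumps_sorted jumps_range _ _ ijK.
Qed.

Lemma jidx_bound rho : (rho <= K.+1)%N -> (jidx m a rho <= m)%N.
Proof.
rewrite leq_eqVlt => /orP [/eqP -> | rhoK]; first by rewrite jidx_last.
by rewrite -[X in (_ <= X)%N](jidx_last); apply/ltnW/jidx_lt; rewrite rhoK /=.
Qed.

Lemma jidx_gap i j : (i < K.+1)%N -> j \in jumps m a ->
  ~~ (jidx m a i < j < jidx m a i.+1)%N.
Proof.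
move=> iK jJ; rewrite (jidxE (ltnW iK)) (jidxE iK).
exact: padded_gap m_gt0 jumps_sorted jumps_range _ _ jJ.
Qed.

End Jumps.

Lemma X0plus_interleave R (x p q : nat -> int) (c : int) :
  (forall rho, (1 <= rho <= R)%N -> x (2 * rho).-1%N = p rho /\ x (2 * rho)%N = q rho) ->
  (forall rho, (1 <= rho <= R)%N -> q rho <= p rho) ->
  (forall rho, (1 <= rho < R)%N -> p rho.+1 <= q rho) ->
  (forall rho, (1 <= rho <= R)%N -> p rho + q (R.+1 - rho)%N = c) ->
  X0plus (2 * R) x /\ (forall i, (1 <= i <= 2 * R)%N -> x i + x ((2 * R).+1 - i)%N = c).
Proof.
move=> xE qp pq pq_sum.
have split_idx i : (1 <= i <= 2 * R)%N ->
    exists2 rho, (1 <= rho <= R)%N & (i = (2 * rho).-1 \/ i = 2 * rho)%N.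
  by move=> iR; exists ((i + 1) %/ 2)%N; lia.
have x_sum i : (1 <= i <= 2 * R)%N -> x i + x ((2 * R).+1 - i)%N = c.
  move=> /split_idx [rho rhoR [-> | ->]]; have rho'R : (1 <= R.+1 - rho <= R)%N by lia.
  - have [-> _] := xE rho rhoR; have [_ x_q] := xE _ rho'R.
    by rewrite (_ : (2 * R).+1 - (2 * rho).-1 = 2 * (R.+1 - rho))%N ?x_q ?pq_sum //; lia.
  - have [_ ->] := xE rho rhoR; have [x_p _] := xE _ rho'R.
    rewrite (_ : (2 * R).+1 - 2 * rho = (2 * (R.+1 - rho)).-1)%N ?x_p; last by lia.
    by rewrite -(pq_sum _ rho'R) addrC (_ : R.+1 - (R.+1 - rho) = rho)%N //; lia.
split=> //; split; last by exists c.
move=> i i1 iR; have [rho rhoR [i_odd | i_even]] := split_idx i ltac:(lia).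
- rewrite i_odd (_ : ((2 * rho).-1.+1 = 2 * rho)%N); last by lia.
  by have [-> ->] := xE rho rhoR; exact: qp.
- have rho1R : (1 <= rho.+1 <= R)%N by lia.
  rewrite i_even (_ : (2 * rho).+1 = (2 * rho.+1).-1)%N; last by lia.
  by have [_ ->] := xE rho rhoR; have [-> _] := xE _ rho1R; apply: pq; lia.
Qed.

Section Position.

Variables (n m : nat) (mu nu : nat -> int) (a : nat -> nat).
Hypotheses (mu0 : X0plus n mu) (nu0 : X0plus m nu).
Hypothesis a_pos : is_position n m (lseq n mu) (lseq m nu) a.

Local Notation l := (lseq n mu).
Local Notation l' := (lseq m nu).

Lemma position_mono j : (0 < j < m)%N -> (a j <= a j.+1)%N.
Proof.
move=> /andP [j0 jm]; case: (mu0) (nu0) => mu_decr _ [nu_decr _].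
have [a_j lt_j _] := @a_pos j ltac:(lia).
have [_ _ le_j1] := @a_pos j.+1 ltac:(lia).
rewrite leqNgt; apply/negP => a_drop.
(* l'_j < l_{a_j} <= l_{1+a_{j+1}} <= l'_{j+1} < l'_j *)
have := lseq_nonincr mu_decr (ltn0Sn _) a_drop ltac:(lia).
have := lseq_sub nu_decr j0 (leqnSn j) jm.
lia.
Qed.

Hypothesis lseq_disjoint :
  forall i j, (1 <= i <= n)%N -> (1 <= j <= m)%N -> l i != l' j.

Lemma position_sym j : (1 <= j <= m)%N -> a (m.+1 - j) = (n - a j)%N.
Proof.
move=> jm; case: (mu0) (nu0) => mu_decr _ [nu_decr _].
have [a_j lt_j le_j] := @a_pos j jm.
have [a_j' lt_j' le_j'] := @a_pos (m.+1 - j)%N ltac:(lia).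
have ne_j := @lseq_disjoint (a j).+1 j ltac:(lia) jm.
have l_na := lseq_sym mu0 (i := a j) ltac:(lia).
have := lseq_sym mu0 (i := (a j).+1) ltac:(lia); rewrite subSS => l_n1a.
apply: (lseq_interval_uniq mu_decr (y := l' (m.+1 - j))); rewrite ?le_j' ?lt_j' //; try lia.
rewrite (_ : (n - a j).+1 = n.+1 - a j)%N ?l_na ?l_n1a ?(lseq_sym nu0 jm); last by lia.
by rewrite lerN2 ltrN2 (ltW lt_j) lt_neqAle le_j ne_j.
Qed.

Lemma lam_step j : (0 < j < m)%N -> lam nu a j.+1 <= lam nu a j.
Proof.
move=> /andP [j0 jm]; case: (mu0) (nu0) => mu_decr _ [nu_decr _].
have [_ _ le_j] := @a_pos j ltac:(lia).
have [a_j1 lt_j1 _] := @a_pos j.+1 ltac:(lia).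
have l'_step : l' j = l' j.+1 + 2 * (nu j - nu j.+1) + 2 by rewrite /lseq; lia.
have := position_mono (j := j) ltac:(lia); rewrite leq_eqVlt => /orP [/eqP a_eq | a_lt].
  by have := nu_decr j j0 jm; rewrite /lam a_eq; lia.
(* l_{1+a_j} - l_{a_{j+1}} >= 2 (a_{j+1} - a_j - 1) is squeezed inside l'_j - l'_{j+1} *)
have := lseq_sub mu_decr (ltn0Sn (a j)) a_lt ltac:(lia).
by rewrite /lam; lia.
Qed.

Lemma lam_nonincr i j : (1 <= i)%N -> (i <= j)%N -> (j <= m)%N -> lam nu a j <= lam nu a i.
Proof. by apply: nonincr_step => k kj; apply: lam_step; lia. Qed.

Lemma lam_sym j : (1 <= j <= m)%N ->
  lam nu a j + lam nu a (m.+1 - j) = wt m nu + n%:Z - m%:Z - 1.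
Proof.
move=> jm; have := X0plus_sum nu0 jm; have := position_sym jm.
have [a_j _ _] := @a_pos j jm.
by rewrite /lam; lia.
Qed.

Lemma jumps_position_sym : map (subn m) (rev (jumps m a)) = jumps m a.
Proof.
apply: jumps_sym => j jm.
have := position_sym (j := j) ltac:(lia); have := position_sym (j := j.+1) ltac:(lia).
have [a_j _ _] := @a_pos j ltac:(lia); have [a_j1 _ _] := @a_pos j.+1 ltac:(lia).
rewrite subSS (_ : (m - j).+1 = m.+1 - j)%N; last by lia.
by move=> -> ->; apply/idP/idP; lia.
Qed.

Hypothesis m_gt0 : (0 < m)%N.

Local Notation K := (size (jumps m a)).
Local Notation J := (jidx m a).

Lemma jidx_block rho j : (0 < rho <= K.+1)%N -> (J rho.-1 < j <= J rho)%N ->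
  a j = a (J rho).
Proof.
move=> rhoK /andP [lo hi].
have J_m := @jidx_bound m a m_gt0 rho ltac:(lia).
apply: (@homo_leq_interval _ eq a j (J rho)) => // [? ? ? -> -> //|i /andP [ji iJ]].
have := @jidx_gap m a m_gt0 rho.-1 i ltac:(lia).
have in_gap : (J rho.-1 < i < J rho)%N by apply/andP; split; lia.
rewrite prednK ?in_gap /=; last by case/andP: rhoK.
have i_pos : (0 < i)%N by lia.
have i_m : (i < m)%N by lia.
rewrite mem_jumps i_pos i_m /= => no_jump.
by apply/eqP; rewrite eqn_leq position_mono ?i_pos //= leqNgt; apply/negP => /no_jump.
Qed.

Lemma jidx_position_sum rho : (0 < rho <= K.+1)%N -> (a (J rho) + a (J (K.+2 - rho)) = n)%N.
Proof.
move=> rhoK.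
have J_lt := @jidx_lt m a m_gt0 rho.-1 rho ltac:(lia).
have J_m := @jidx_bound m a m_gt0 rho ltac:(lia).
have [a_J _ _] := @a_pos (J rho) ltac:(lia).
have J_sym := @jidx_sym m a rho.-1 jumps_position_sym ltac:(lia).
rewrite (_ : K.+2 - rho = K.+1 - rho.-1)%N ?J_sym; last by lia.
rewrite (_ : m - J rho.-1 = m.+1 - (J rho.-1).+1)%N ?position_sym; try lia.
by rewrite (@jidx_block rho) //; lia.
Qed.

Lemma position_jidx_range rho : (0 < rho <= K.+1)%N -> (0 < a (J rho) <= n.-1)%N.
Proof.
move=> rhoK; have [] // := @a_pos (J rho).
have := @jidx_lt m a m_gt0 rho.-1 rho ltac:(lia).
by have := @jidx_bound m a m_gt0 rho ltac:(lia); lia.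
Qed.

Lemma chk_jidx_X0plus (u : nat -> int) :
  (forall rho, (1 <= rho <= K.+1)%N ->
     u (2 * rho).-1%N = chk n mu (a (J rho)) /\ u (2 * rho)%N = chk n mu (a (J rho)).+1) ->
  X0plus (2 * K.+1) u /\
  (forall i, (1 <= i <= 2 * K.+1)%N -> u i + u ((2 * K.+1).+1 - i)%N = - wt n mu).
Proof.
case: (mu0) => mu_decr _ uE.
apply: (X0plus_interleave (p := fun rho => chk n mu (a (J rho)))
                          (q := fun rho => chk n mu (a (J rho)).+1) uE) => rho rhoK /=.
- by have := position_jidx_range rhoK => a_J; apply: (chk_nonincr mu_decr); lia.
- have := @jidx_jump m a rho ltac:(lia); rewrite mem_jumps => /and3P [_ _ jump].
  have block : a (J rho).+1 = a (J rho.+1).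
    apply: jidx_block => /=; first by lia.
    by rewrite ltnSn; apply: (@jidx_lt m a m_gt0); lia.
  have := position_jidx_range (rho := rho.+1) ltac:(lia) => a_J1.
  by apply: (chk_nonincr mu_decr); lia.
- have := jidx_position_sum rhoK; have := position_jidx_range rhoK => a_J J_sum.
  rewrite (_ : (a (J (K.+2 - rho))).+1 = n.+1 - a (J rho))%N; last by lia.
  by apply: (chk_sum mu0); lia.
Qed.

Lemma lam_jidx_X0plus (v : nat -> int) (s : int) :
  (forall rho, (1 <= rho <= K.+1)%N ->
     v (2 * rho).-1%N = lam nu a (J rho.-1).+1 - s /\ v (2 * rho)%N = lam nu a (J rho) - s) ->
  X0plus (2 * K.+1) v /\
  (forall i, (1 <= i <= 2 * K.+1)%N ->
     v i + v ((2 * K.+1).+1 - i)%N = wt m nu + n%:Z - m%:Z - 1 - 2 * s).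
Proof.
move=> vE.
apply: (X0plus_interleave (p := fun rho => lam nu a (J rho.-1).+1 - s)
                          (q := fun rho => lam nu a (J rho) - s) vE) => rho rhoK /=.
- have := @jidx_lt m a m_gt0 rho.-1 rho ltac:(lia).
  have := @jidx_bound m a m_gt0 rho ltac:(lia).
  by move=> J_m J_lt; rewrite lerD2r; apply: lam_nonincr.
- have := @jidx_lt m a m_gt0 rho K.+1 ltac:(lia); rewrite jidx_last => J_m.
  by rewrite /= lerD2r; apply: lam_step; have := @jidx_lt m a m_gt0 0 rho; lia.
- have := @jidx_lt m a m_gt0 rho.-1 rho ltac:(lia).
  have := @jidx_bound m a m_gt0 rho ltac:(lia) => J_m J_lt.
  have J_sym := @jidx_sym m a rho.-1 jumps_position_sym ltac:(lia).
  rewrite (_ : K.+2 - rho = K.+1 - rho.-1)%N ?J_sym; last by lia.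
  rewrite (_ : m - J rho.-1 = m.+1 - (J rho.-1).+1)%N; last by lia.
  by have := @lam_sym (J rho.-1).+1 ltac:(lia); lia.
Qed.

End Position.

Theorem lemma5p1 (n m : nat) (mu nu : nat -> int) (a : nat -> nat) (s : int)
  (u v : nat -> int) :
  (1 <= n)%N -> (1 <= m)%N -> ~ (n = 1%N /\ m = 1%N) -> ~~ (odd n && odd m) ->
  X0plus n mu -> X0plus m nu ->
  lseq m nu 1 < lseq n mu 1 ->
  (forall i j : nat, (1 <= i <= n)%N -> (1 <= j <= m)%N -> lseq n mu i != lseq m nu j) ->
  is_position n m (lseq n mu) (lseq m nu) a ->
  let r := (size (jumps m a)).+1 in
  (forall rho : nat, (1 <= rho <= r)%N ->
     u (2 * rho).-1%N = chk n mu (a (jidx m a rho)) /\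
     u (2 * rho)%N = chk n mu (a (jidx m a rho)).+1) ->
  (forall rho : nat, (1 <= rho <= r)%N ->
     v (2 * rho).-1%N = lam nu a (jidx m a rho.-1).+1 - s /\
     v (2 * rho)%N = lam nu a (jidx m a rho) - s) ->
  [/\ X0plus (2 * r) u, X0plus (2 * r) v,
      (forall i : nat, (1 <= i <= 2 * r)%N -> u i + u ((2 * r).+1 - i)%N = - wt n mu) &
      (forall i : nat, (1 <= i <= 2 * r)%N ->
         v i + v ((2 * r).+1 - i)%N = wt m nu + n%:Z - m%:Z - 1 - 2 * s)].
Proof.
move=> _ m_gt0 _ _ mu0 nu0 _ l_disjoint a_pos r uE vE.
have [u_X0 u_sum] := chk_jidx_X0plus mu0 nu0 a_pos l_disjoint m_gt0 uE.
have [v_X0 v_sum] := lam_jidx_X0plus mu0 nu0 a_pos l_disjoint m_gt0 vE.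
by split.
Qed.
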